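(* Every locally stable commutative ring $R$ is strongly completable; that is, for every $n\geq 2$ and all $a_1,\dots,a_n,d\in R$ with $a_1R+\cdots+a_nR=dR$, there exists an $n\times n$ matrix $A$ over $R$ whose first row is $(a_1,\dots,a_n)$ and with $\det(A)=d$.
   Context: All rings are commutative with identity. A ring $R$ has stable range 1 if whenever $a,b\in R$ with $aR+bR=R$, there exists $y\in R$ such that $a+by$ is a unit. A ring $R$ is locally stable if whenever $a,b\in R$ with $aR+bR=R$, there exists $y\in R$ such that $R/(a+by)R$ has stable range 1. *)

From mathcomp Require Import all_boot all_algebra.
Set Implicit Arguments. Unset Strict Implicit. Unset Printing Implicit Defensive.
Import GRing.Theory.
Local Open Scope ring_scope.

Definition congr_mod (R : comUnitRingType) (c x y : R) : Prop :=
  exists t : R, x - y = c * t.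

(* The quotient ring R/cR has stable range 1, written out in R:
   whenever a,b satisfy aR + bR = R modulo cR (i.e. a*r + b*s = 1 mod c),
   there is y with a + b*y a unit modulo cR (i.e. (a+by)u = 1 mod c).
   Elements of R/cR are represented by elements of R. *)
Definition quot_stable_range1 (R : comUnitRingType) (c : R) : Prop :=
  forall a b : R,
    (exists r s : R, congr_mod c (a * r + b * s) 1) ->
    exists y u : R, congr_mod c ((a + b * y) * u) 1.

Definition stable_range1 (R : comUnitRingType) : Prop :=
  forall a b : R, (exists r s : R, a * r + b * s = 1) ->
    exists y : R, (a + b * y) \is a GRing.unit.

Definition locally_stable (R : comUnitRingType) : Prop :=
  forall a b : R, (exists r s : R, a * r + b * s = 1) ->
    exists y : R, quot_stable_range1 (a + b * y).

Definition ideal_eq_principal (R : comUnitRingType) (n : nat)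
    (a : 'I_n -> R) (d : R) : Prop :=
  forall x : R, (exists c : 'I_n -> R, x = \sum_(i < n) a i * c i)
                <-> (exists r : R, x = d * r).

Definition strongly_completable (R : comUnitRingType) : Prop :=
  forall (n : nat), (2 <= n)%N ->
  forall (a : 'I_n -> R) (d : R), ideal_eq_principal a d ->
    exists A : 'M[R]_n,
      (forall (i0 : 'I_n), nat_of_ord i0 = 0%N -> forall j : 'I_n, A i0 j = a j)
      /\ \det A = d.

(* Write a = d u; the hypothesis on the ideal says that u is unimodular modulo
   Ann(d).  Applying local stability twice yields a unipotent column
   transformation E after which the first two entries
   x, x' of u E satisfy d (x r + x' s) = d for some r, s.  The block matrix with
   rows d (u E), (-s, r, 0, ..., 0) and the identity below then has
   determinant d, and multiplying it by E^-1 gives the required completion. *)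

From mathcomp Require Import all_boot all_algebra.
From mathcomp Require Import ring.
Set Implicit Arguments. Unset Strict Implicit. Unset Printing Implicit Defensive.
Import GRing.Theory.
Local Open Scope ring_scope.

Lemma det_mx2 (R : comPzRingType) (M : 'M[R]_2) :
  \det M = M 0 0 * M 1 1 - M 0 1 * M 1 0.
Proof.
rewrite (expand_det_row _ 0) !big_ord_recl big_ord0 /cofactor !det_mx11 !mxE.
have lift01 : lift (0 : 'I_2) ord0 = 1 by apply: val_inj.
have lift10 : lift (1 : 'I_2) ord0 = 0 by apply: val_inj.
rewrite lift01 lift10 /= expr0 expr1; ring.
Qed.

Lemma locally_stable_reduce (R : comUnitRingType) (d a b g c1 c2 e : R) :
  locally_stable R -> a * c1 + b * c2 + g + e = 1 -> d * e = 0 ->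
  exists p q w r s, d * ((a + b * p + g * q) * r + (b + g * w) * s) = d.
Proof.
(* Local stability makes R/cR of stable range 1 for c := a + (b c2 + g + e) y,
   and there (b, g + e) is unimodular; the e-terms die after multiplying by d. *)
move=> LS abge de0.
have {abge} e_def : e = 1 - a * c1 - b * c2 - g by rewrite -abge; ring.
have [y src] : exists y, quot_stable_range1 (a + (b * c2 + g + e) * y).
  by apply: LS; exists c1, 1; rewrite e_def; ring.
set c := a + _ * y in src.
have [z [v [t bgv]]] : exists z v, congr_mod c ((b + (g + e) * z) * v) 1.
  apply: src; exists (c2 * (1 - y * c1)), (1 - y * c1), (- c1).
  by rewrite /c e_def; ring.
exists (c2 * y), y, z, (- t), v.
have -> : (a + b * (c2 * y) + g * y) * - t + (b + g * z) * v
    = ((b + (g + e) * z) * v - 1 - c * t) + 1 + e * (y * t - z * v).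
  by rewrite /c; ring.
by rewrite bgv subrr add0r mulrDr mulrA de0 mul0r addr0 mulr1.
Qed.

Section RowCompletion.

Variables (R : comPzRingType) (m : nat).

Lemma row_completion_head (x : 'rV[R]_2) (y : 'rV[R]_m) r s :
  exists A : 'M[R]_(2 + m),
    row ord0 A = row_mx x y /\ \det A = x 0 0 * r + x 0 1 * s.
Proof.
pose X : 'M[R]_2 :=
  \matrix_(i, j) if i == 0 then x 0 j else if j == 0 then - s else r.
pose Y : 'M[R]_(2, m) := \matrix_(i, j) if i == 0 then y 0 j else 0.
exists (block_mx X Y 0 1%:M); split.
  have -> : ord0 = lshift m (0 : 'I_2) by apply: val_inj.
  rewrite block_mxEv (@rowKu _ 2 m) row_row_mx.
  by congr row_mx; apply/rowP => j; rewrite !mxE.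
rewrite det_ublock det1 mulr1 det_mx2 !mxE /=; ring.
Qed.

Lemma row_transvection (x : 'rV[R]_2) (y : 'rV[R]_m) (c : 'cV[R]_m) p q w :
  let g := (y *m c) 0 0 in
  exists E : 'M[R]_(2 + m), \det E = 1 /\
    row_mx x y *m E = row_mx
      (\row_j (if j == 0 then x 0 0 + x 0 1 * p + g * q else x 0 1 + g * w)) y.
Proof.
move=> g.
pose E11 : 'M[R]_2 :=
  \matrix_(i, j) if i == j then 1 else if i == 1 then p else 0.
exists (block_mx E11 0 (c *m \row_j (if j == 0 then q else w)) 1%:M); split.
  by rewrite det_lblock det1 mulr1 det_mx2 !mxE /=; ring.
rewrite mul_row_block mulmx0 mulmx1 add0r; congr row_mx.
have lift01 : lift ord0 ord0 = 1 :> 'I_2 by apply: val_inj.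
apply/rowP => j; rewrite mulmxA /g !mxE !big_ord_recl !big_ord0 !mxE /= lift01.
by case: j => [[|[|//]]] ? /=; ring.
Qed.

End RowCompletion.

Lemma row_completion_mulmx (R : comUnitRingType) n (i : 'I_n)
    (u : 'rV[R]_n) (E : 'M[R]_n) d :
  \det E = 1 -> (exists A, row i A = u *m E /\ \det A = d) ->
  exists A : 'M[R]_n, row i A = u /\ \det A = d.
Proof.
move=> detE [A [rowA detA]].
have unitE : E \in unitmx by rewrite unitmxE detE unitr1.
exists (A *m invmx E); split; first by rewrite row_mul rowA mulmxK.
by rewrite det_mulmx det_inv detE invr1 mulr1.
Qed.

Lemma scaled_unimodular_row_completion (R : comUnitRingType) m
    (u : 'rV[R]_(2 + m)) (c : 'cV[R]_(2 + m)) d :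
  locally_stable R -> d * (u *m c) 0 0 = d ->
  exists A : 'M[R]_(2 + m), row ord0 A = d *: u /\ \det A = d.
Proof.
move=> LS; rewrite -[u]hsubmxK -[c]vsubmxK mul_row_col.
move: (lsubmx u) (rsubmx u) (usubmx c) (dsubmx c) => x y c1 c2.
have lift01 : lift ord0 ord0 = 1 :> 'I_2 by apply: val_inj.
set g := (y *m c2) 0 0.
rewrite [_ 0 0]mxE [(x *m c1) 0 0]mxE !big_ord_recl big_ord0 addr0 lift01 -/g.
set xc := _ + _ * _ => ud.
have xc_unit : xc + g + (1 - (xc + g)) = 1 by rewrite addrC subrK.
have de : d * (1 - (xc + g)) = 0 by rewrite mulrBr mulr1 ud subrr.
have [p [q [w [r [s prs]]]]] := locally_stable_reduce LS xc_unit de.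
have [E [detE xyE]] := row_transvection x y c2 p q w.
have [A [rowA detA]] := row_completion_head (d *: \row_j (if j == 0
    then x 0 0 + x 0 1 * p + g * q else x 0 1 + g * w)) (d *: y) r s.
apply: (row_completion_mulmx detE).
rewrite -scalemxAl xyE scale_row_mx.
by exists A; split => //; rewrite detA !mxE /= -[RHS]prs; ring.
Qed.

Lemma ideal_eq_principal_unimodular (R : comUnitRingType) n (a : 'I_n -> R) d :
  ideal_eq_principal a d ->
  exists a' c : 'I_n -> R,
    (forall i, a i = d * a' i) /\ d * \sum_(i < n) a' i * c i = d.
Proof.
move=> ideal_ad.
have [c dE] : exists c, d = \sum_(i < n) a i * c i.
  by apply/(ideal_ad d).2; exists 1; rewrite mulr1.
have /fin_all_exists [a' aE] : forall i, exists r, a i = d * r.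
  move=> i; apply/(ideal_ad (a i)).1; exists (fun k => (k == i)%:R).
  rewrite (bigD1 i) //= eqxx mulr1 big1 ?addr0 // => k /negbTE ->.
  by rewrite mulr0.
exists a', c; split=> //; rewrite [RHS]dE mulr_sumr.
by apply: eq_bigr => i _; rewrite aE mulrA.
Qed.

Theorem theorem4p1 (R : comUnitRingType) :
  locally_stable R -> strongly_completable R.
Proof.
move=> LS [|[|m]] // _ a d /ideal_eq_principal_unimodular [a' [c [aE unimod]]].
have [|A [rowA detA]] :=
  scaled_unimodular_row_completion
    (u := \row_i a' i) (c := \col_i c i) (d := d) LS.
  rewrite !mxE -[RHS]unimod; congr (d * _).
  by apply: eq_bigr => i _; rewrite !mxE.
exists A; split=> // i0 i0E j; have -> : i0 = ord0 by apply: val_inj.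
by rewrite aE; move/rowP/(_ j): rowA; rewrite !mxE.
Qed.
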